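(* Consider the discrete first-price auction in the model without ties, with values drawn i.i.d. from a distribution with full support on $X$. If $\beta$ and $\beta'$ are both symmetric equilibrium bidding functions with $\beta(1)=\beta'(1)$, then $\beta=\beta'$. That is, the SE (if it exists) is unique up to the choice of $\beta(1)\in\{0,1\}$.
   Context: Model. There are $n\ge 2$ risk-neutral bidders competing for one indivisible object. Normalise the grid so that values and bids lie in $X=\{0,1,2,\dots,x\}$ for some $x\in\mathbb N$. Each bidder $i$ privately learns a value $v_i\in X$; values are drawn independently from a common distribution in which every element of $X$ has strictly positive probability. Each bidder submits a bid $b_i\in X$. A (pure) strategy is a bidding function $\beta:X\to X$. In the model without ties, bidder $i$ wins iff $b_i>b_j$ for all $j\neq i$ (if the highest bid is tied, nobody wins). In the first-price auction, a bidder with value $v_i$ bidding $b_i$ gets expected payoff $(v_i-b_i)\Pr(i\text{ wins})$. An equilibrium is a profile of bidding functions such that each bidder's bidding function maximises their expected payoff given the others' bidding functions (a pure-strategy Bayes–Nash equilibrium) and such that no bidder uses a weakly dominated bidding function (a bidding function is weakly dominated if some other bidding function yields at least as high expected payoff against every profile of opponents' bidding functions, and strictly higher against some). A symmetric equilibrium (SE) is an equilibrium in which all bidders use the same bidding function $\beta$. *)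

From mathcomp Require Import all_boot all_order all_algebra.
Set Implicit Arguments. Unset Strict Implicit. Unset Printing Implicit Defensive.
Import Order.TTheory GRing.Theory Num.Theory.
Local Open Scope ring_scope.

(* Grid X = {0,...,x} is 'I_x.+1; a value/bid v : 'I_x.+1 stands for the
   natural number (val v). A pure strategy is a bidding function X -> X. *)
Definition strat (x : nat) := 'I_x.+1 -> 'I_x.+1.

Definition profile (n x : nat) := 'I_n -> strat x.

Section Auction.
Variables (R : realFieldType) (n x : nat) (p : 'I_x.+1 -> R).

Definition full_support_dist := (forall v, 0 < p v) /\ \sum_(v < x.+1) p v = 1.

(* Probability that bidder i, bidding b, wins (model without ties: every
   opponent's bid must be strictly lower), when the opponents j != i use the
   bidding functions prof j and values are drawn i.i.d. from p. *)
Definition win_prob (prof : profile n x) (i : 'I_n) (b : 'I_x.+1) : R :=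
  \prod_(j < n | j != i) \sum_(w < x.+1 | (val (prof j w) < val b)%N) p w.

(* Expected payoff of bidder i using bidding function beta in the first-price
   auction, against the opponents' bidding functions in prof (entry i of prof
   is ignored). *)
Definition payoff (prof : profile n x) (i : 'I_n) (beta : strat x) : R :=
  \sum_(v < x.+1) p v * (((val v)%:R - (val (beta v))%:R) * win_prob prof i (beta v)).

Definition weakly_dominated (i : 'I_n) (beta : strat x) : Prop :=
  exists beta' : strat x,
    (forall prof : profile n x, payoff prof i beta <= payoff prof i beta') /\
    (exists prof : profile n x, payoff prof i beta < payoff prof i beta').

Definition equilibrium (prof : profile n x) : Prop :=
  (forall (i : 'I_n) (beta' : strat x), payoff prof i beta' <= payoff prof i (prof i)) /\
  (forall i : 'I_n, ~ weakly_dominated i (prof i)).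

Definition symmetric_equilibrium (beta : strat x) : Prop :=
  equilibrium (fun _ => beta).

End Auction.

From mathcomp Require Import all_boot all_order all_algebra ring zify.
Set Implicit Arguments. Unset Strict Implicit. Unset Printing Implicit Defensive.
Import Order.TTheory GRing.Theory Num.Theory.
Local Open Scope ring_scope.

(* Since values have full support, a bidding function can be modified at a
   single value v without touching the others, and the payoff changes by
   p v times the change of the interim payoff (v - b) * Pr(win | b).  Hence
   (1) an equilibrium strategy is a pointwise best response, and
   (2) an undominated strategy admits no bid that pointwise weakly dominates
       its own bid; this forces beta v <= v, and beta v < v once v >= 2.
   In a symmetric profile Pr(win | c) = F(c)^(n-1), where F(c) is the
   probability that one opponent bids below c.  A single-crossing argument
   then shows that symmetric equilibria are monotone.  Finally, if two
   symmetric equilibria agree below v >= 2 but beta1 v < beta2 v, then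
   F1 = F2 at beta1 v while F1 > F2 at beta2 v; chaining the two pointwise
   best-response inequalities at v yields a contradiction.  Strong induction
   on v, with the base cases v = 0 (bid 0) and v = 1 (hypothesis), concludes. *)

Lemma no_crossing (R : numDomainType) (a a' b b' A B : R) :
  a < a' -> b' < b -> 0 < B -> A <= B ->
  (a - b') * A <= (a - b) * B -> (a' - b) * B <= (a' - b') * A -> False.
Proof.
move=> lt_aa' lt_b'b B_gt0 le_AB opt_a opt_a'.
have sum_le0 : (a' - a) * (B - A) <= 0.
  have -> : (a' - a) * (B - A)
          = ((a - b') * A - (a - b) * B) + ((a' - b) * B - (a' - b') * A) by ring.
  by rewrite -(addr0 0); apply: lerD; rewrite subr_le0.
rewrite pmulr_rle0 ?subr_gt0 // subr_le0 in sum_le0.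
have eq_AB : A = B by apply/eqP; rewrite eq_le le_AB.
by move: opt_a; rewrite eq_AB ler_pM2r // lerD2l lerN2 (lt_geF lt_b'b).
Qed.

Section Deviations.
Variables (R : realFieldType) (n x : nat) (p : 'I_x.+1 -> R).
Hypothesis p_full : full_support_dist p.

Lemma p_gt0 v : 0 < p v. Proof. by case: p_full. Qed.
Lemma p_ge0 v : 0 <= p v. Proof. exact: ltW (p_gt0 v). Qed.

Definition interim_payoff (prof : profile n x) (i : 'I_n) (v b : 'I_x.+1) : R :=
  ((val v)%:R - (val b)%:R) * win_prob p prof i b.

Definition deviate (beta : strat x) (v0 b : 'I_x.+1) : strat x :=
  fun v => if v == v0 then b else beta v.

Lemma payoff_deviate prof i beta v0 b :
  payoff p prof i (deviate beta v0 b) = payoff p prof i beta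
    + p v0 * (interim_payoff prof i v0 b - interim_payoff prof i v0 (beta v0)).
Proof.
rewrite /payoff (bigD1 v0) // [in RHS](bigD1 v0) //= /deviate eqxx.
rewrite (eq_bigr (fun v => p v * interim_payoff prof i v (beta v))); last first.
  by move=> v /negbTE ->.
rewrite /interim_payoff; ring.
Qed.

Lemma best_response_pointwise prof i v b :
  (forall beta', payoff p prof i beta' <= payoff p prof i (prof i)) ->
  interim_payoff prof i v b <= interim_payoff prof i v (prof i v).
Proof.
move=> best; have := best (deviate (prof i) v b).
by rewrite payoff_deviate gerDl pmulr_rle0 ?subr_le0 // p_gt0.
Qed.

Lemma undominated_pointwise (i : 'I_n) beta v b :
  ~ weakly_dominated p i beta ->
  (forall prof, interim_payoff prof i v (beta v) <= interim_payoff prof i v b) ->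
  (exists prof, interim_payoff prof i v (beta v) < interim_payoff prof i v b) ->
  False.
Proof.
move=> undom never_worse [prof better]; apply: undom.
exists (deviate beta v b); split.
- move=> pr; rewrite payoff_deviate lerDl mulr_ge0 ?p_ge0 //.
  by rewrite subr_ge0.
- by exists prof; rewrite payoff_deviate ltrDl mulr_gt0 ?p_gt0 // subr_gt0.
Qed.

Lemma win_prob_ge0 (prof : profile n x) i b : 0 <= win_prob p prof i b.
Proof. by apply: prodr_ge0 => j _; apply: sumr_ge0 => w _; apply: p_ge0. Qed.

Definition bid_zero : profile n x := fun _ _ => ord0.

Lemma win_prob_bid_zero i (b : 'I_x.+1) : (0 < val b)%N -> win_prob p bid_zero i b = 1.
Proof.
move=> b_gt0; apply: big1 => j _.
by rewrite (eq_bigl xpredT) => [|w]; [case: p_full | rewrite /= b_gt0].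
Qed.

(* Overbidding is dominated by bidding one's value. *)
Lemma undominated_bid_le_value (i : 'I_n) beta v :
  ~ weakly_dominated p i beta -> (val (beta v) <= val v)%N.
Proof.
move=> undom; rewrite leqNgt; apply/negP => overbid.
apply: (undominated_pointwise (v := v) (b := v) undom).
- move=> prof; rewrite /interim_payoff subrr mul0r.
  by rewrite mulr_le0_ge0 ?win_prob_ge0 // subr_le0 ler_nat ltnW.
- exists bid_zero; rewrite /interim_payoff subrr mul0r.
  rewrite win_prob_bid_zero ?(leq_ltn_trans _ overbid) //.
  by rewrite mulr1 subr_lt0 ltr_nat.
Qed.

Lemma undominated_bid_zero (i : 'I_n) beta v :
  ~ weakly_dominated p i beta -> val v = 0%N -> val (beta v) = 0%N.
Proof. by move=> undom v0; apply/eqP; rewrite -leqn0 -v0 (undominated_bid_le_value _ undom). Qed.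

(* From value 2 on, bidding one's value is dominated by bidding value - 1. *)
Lemma undominated_bid_lt_value (i : 'I_n) beta v :
  ~ weakly_dominated p i beta -> (2 <= val v)%N -> (val (beta v) < val v)%N.
Proof.
move=> undom v_ge2; rewrite ltn_neqAle (undominated_bid_le_value _ undom) andbT.
apply/negP => /eqP bid_value.
have pred_v_lt : ((val v).-1 < x.+1)%N := leq_ltn_trans (leq_pred _) (ltn_ord v).
apply: (undominated_pointwise (v := v) (b := Ordinal pred_v_lt) undom).
- move=> prof; rewrite /interim_payoff bid_value subrr mul0r.
  by rewrite mulr_ge0 ?win_prob_ge0 // subr_ge0 ler_nat leq_pred.
- exists bid_zero; rewrite /interim_payoff bid_value subrr mul0r.
  have v_gt1 : (1 < v)%N := v_ge2.
  by rewrite win_prob_bid_zero /= ?mulr1 ?subr_gt0 ?ltr_nat; lia.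
Qed.

End Deviations.

Section SymmetricProfiles.
Variables (R : realFieldType) (n x : nat) (p : 'I_x.+1 -> R).
Hypothesis p_full : full_support_dist p.

Definition bid_below (beta : strat x) (c : 'I_x.+1) : R :=
  \sum_(w < x.+1 | (val (beta w) < val c)%N) p w.

(* Opponents bid independently, so winning against all n - 1 of them
   is the (n - 1)-th power of beating one. *)
Lemma win_prob_symmetric beta (i : 'I_n) c :
  win_prob p (fun _ => beta) i c = bid_below beta c ^+ n.-1.
Proof. by rewrite /win_prob prodr_const cardC1 card_ord. Qed.

Lemma bid_below_ge0 beta c : 0 <= bid_below beta c.
Proof. by apply: sumr_ge0 => w _; apply: p_ge0. Qed.

Lemma bid_below_mono beta (c c' : 'I_x.+1) :
  (val c <= val c')%N -> bid_below beta c <= bid_below beta c'.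
Proof.
move=> le_cc'; rewrite /bid_below !(big_mkcond (fun w => (val (beta w) < val _)%N)).
apply: ler_sum => w _; case: ifP => [below_c|_]; last by case: ifP; rewrite ?p_ge0.
by rewrite (leq_trans below_c le_cc').
Qed.

Lemma bid_below_gt0 beta (c : 'I_x.+1) :
  val (beta ord0) = 0%N -> (0 < val c)%N -> 0 < bid_below beta c.
Proof.
move=> bid0 c_gt0; rewrite /bid_below (bigD1 ord0) /= ?bid0 //.
by rewrite ltr_pwDl ?p_gt0 ?bid_below_ge0 //; apply: sumr_ge0 => w _; apply: p_ge0.
Qed.

Definition monotone_bid (beta : strat x) : Prop :=
  forall v w : 'I_x.+1, (val v <= val w)%N -> (val (beta v) <= val (beta w))%N.

Variable beta : strat x.
Hypothesis beta_eq : symmetric_equilibrium n p beta.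

(* In a symmetric equilibrium, each value's bid is optimal against the
   opponents' bid distribution; the bidder i only witnesses n > 0. *)
Lemma sym_best_response (i : 'I_n) v c :
  ((val v)%:R - (val c)%:R) * bid_below beta c ^+ n.-1
  <= ((val v)%:R - (val (beta v))%:R) * bid_below beta (beta v) ^+ n.-1.
Proof.
rewrite -!(win_prob_symmetric _ i).
exact: (best_response_pointwise p_full _ _ (beta_eq.1 i)).
Qed.

(* Symmetric equilibria are monotone, by single crossing. *)
Lemma sym_eq_monotone (i : 'I_n) : monotone_bid beta.
Proof.
move=> v v' le_vv'; rewrite leqNgt; apply/negP => bid_drop.
have lt_vv' : (val v < val v')%N.
  rewrite ltn_neqAle le_vv' andbT; apply: contraTneq bid_drop => /val_inj->.
  by rewrite ltnn.
have bid0 : val (beta ord0) = 0%N := undominated_bid_zero (v := ord0) p_full (beta_eq.2 i) erefl.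
apply: (@no_crossing R (val v)%:R (val v')%:R (val (beta v))%:R (val (beta v'))%:R
  (bid_below beta (beta v') ^+ n.-1) (bid_below beta (beta v) ^+ n.-1)).
- by rewrite ltr_nat.
- by rewrite ltr_nat.
- by rewrite exprn_gt0 // bid_below_gt0 // (leq_ltn_trans _ bid_drop).
- by rewrite lerXn2r ?nnegrE ?bid_below_ge0 // bid_below_mono // ltnW.
- exact: sym_best_response.
- exact: sym_best_response.
Qed.

End SymmetricProfiles.

Section Uniqueness.
Variables (R : realFieldType) (n x : nat) (p : 'I_x.+1 -> R).
Hypothesis p_full : full_support_dist p.

Definition agree_below (beta1 beta2 : strat x) (v : 'I_x.+1) : Prop :=
  forall w : 'I_x.+1, (val w < val v)%N -> beta1 w = beta2 w.

(* For monotone strategies agreeing below v, a value w >= v bids at least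
   beta1 v (resp. beta2 v), so at a bid c below both, only values below v are
   counted and the two opponent bid distributions coincide. *)
Lemma bid_below_agree beta1 beta2 v c :
  monotone_bid beta1 -> monotone_bid beta2 -> agree_below beta1 beta2 v ->
  (val c <= val (beta1 v))%N -> (val c <= val (beta2 v))%N ->
  bid_below p beta1 c = bid_below p beta2 c.
Proof.
move=> mono1 mono2 agree c_le1 c_le2; apply: eq_bigl => w /=.
case: (ltnP (val w) (val v)) => [w_lt | v_le]; first by rewrite agree.
by rewrite !ltnNge (leq_trans c_le1 (mono1 _ _ v_le)) (leq_trans c_le2 (mono2 _ _ v_le)).
Qed.

(* If beta1 bids strictly less than beta2 at v, then at the bid beta2 v the
   value v itself is counted for beta1 but not for beta2. *)
Lemma bid_below_gap beta1 beta2 v :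
  monotone_bid beta2 -> agree_below beta1 beta2 v ->
  (val (beta1 v) < val (beta2 v))%N ->
  p v + bid_below p beta2 (beta2 v) <= bid_below p beta1 (beta2 v).
Proof.
move=> mono2 agree lt12.
rewrite /bid_below !(big_mkcond (fun w => (val (_ w) < val (beta2 v))%N)) /=.
rewrite [in X in _ <= X](bigD1 v) //= [in X in _ + X](bigD1 v) //=.
rewrite ltnn lt12 add0r lerD2l; apply: ler_sum => w _.
case: (ltnP (val w) (val v)) => [w_lt | v_le]; first by rewrite agree.
by rewrite ltnNge mono2 //=; case: ifP; rewrite ?p_ge0.
Qed.

Hypothesis n_gt1 : (1 < n)%N.

(* Two symmetric equilibria agreeing below v >= 2 cannot bid differently at v:
   if beta1 v < beta2 v, the opponents under beta1 are strictly easier to beat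
   at beta2 v and equally easy at beta1 v, contradicting the optimality of
   beta1 v for beta1 against that of beta2 v for beta2. *)
Lemma no_upward_gap beta1 beta2 v :
  symmetric_equilibrium n p beta1 -> symmetric_equilibrium n p beta2 ->
  agree_below beta1 beta2 v -> (2 <= val v)%N ->
  ~ (val (beta1 v) < val (beta2 v))%N.
Proof.
move=> eq1 eq2 agree v_ge2 lt12.
pose i : 'I_n := Ordinal (ltnW n_gt1).
have mono1 := sym_eq_monotone p_full eq1 i.
have mono2 := sym_eq_monotone p_full eq2 i.
set b1 := beta1 v in lt12 *; set b2 := beta2 v in lt12 *.
have below_eq : bid_below p beta1 b1 = bid_below p beta2 b1.
  exact: bid_below_agree mono1 mono2 agree (leqnn _) (ltnW lt12).
have below_lt : bid_below p beta2 b2 < bid_below p beta1 b2.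
  by apply: lt_le_trans (bid_below_gap mono2 agree lt12); rewrite ltrDr p_gt0.
have win_lt : bid_below p beta2 b2 ^+ n.-1 < bid_below p beta1 b2 ^+ n.-1.
  by rewrite ltrXn2r ?bid_below_ge0 // -lt0n ltn_predRL.
have margin_gt0 : 0 < (val v)%:R - (val b2)%:R :> R.
  by rewrite subr_gt0 ltr_nat (undominated_bid_lt_value p_full (eq2.2 i) v_ge2).
have opt1 := sym_best_response p_full eq1 i v b2; rewrite -/b1 below_eq in opt1.
have opt2 := sym_best_response p_full eq2 i v b1; rewrite -/b2 in opt2.
rewrite -(ltr_pM2l margin_gt0) in win_lt.
by have := lt_le_trans win_lt (le_trans opt1 opt2); rewrite ltxx.
Qed.

(* Inductive step: symmetric equilibria agreeing at value 1 and below v agree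
   at v.  Value 0 must bid 0, value 1 is given, and from 2 on neither bid can
   exceed the other. *)
Lemma sym_eq_agree_at beta1 beta2 v :
  symmetric_equilibrium n p beta1 -> symmetric_equilibrium n p beta2 ->
  (forall w : 'I_x.+1, val w = 1%N -> beta1 w = beta2 w) ->
  agree_below beta1 beta2 v -> beta1 v = beta2 v.
Proof.
move=> eq1 eq2 agree1 agree.
pose i : 'I_n := Ordinal (ltnW n_gt1).
have [v0 | v1 | v_ge2] : [\/ val v = 0%N, val v = 1%N | (2 <= val v)%N].
  by case: (val v) => [|[|k]]; [constructor 1 | constructor 2 | constructor 3].
- apply: val_inj.
  by rewrite (undominated_bid_zero p_full (eq1.2 i) v0) (undominated_bid_zero p_full (eq2.2 i) v0).
- exact: agree1.
- case: (ltngtP (val (beta1 v)) (val (beta2 v))) => [lt12 | lt21 | /val_inj //].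
  + by case: (no_upward_gap eq1 eq2 agree v_ge2 lt12).
  + have agree' : agree_below beta2 beta1 v by move=> w /agree ->.
    by case: (no_upward_gap eq2 eq1 agree' v_ge2 lt21).
Qed.

End Uniqueness.

Theorem lemma5 (R : realFieldType) (n x : nat) (p : 'I_x.+1 -> R)
  (beta beta' : strat x) :
  (2 <= n)%N ->
  full_support_dist p ->
  symmetric_equilibrium n p beta ->
  symmetric_equilibrium n p beta' ->
  (forall v : 'I_x.+1, val v = 1%N -> beta v = beta' v) ->
  beta =1 beta'.
Proof.
move=> n_gt1 p_full eq eq' agree1 v.
suff agree_upto k (w : 'I_x.+1) : (val w < k)%N -> beta w = beta' w.
  exact: (agree_upto (val v).+1).
elim: k w => [// | k IH] w; rewrite ltnS => w_le.
apply: (sym_eq_agree_at p_full n_gt1 eq eq' agree1) => u u_lt.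
exact/IH/(leq_trans u_lt).
Qed.
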